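(* Let $N\ge1$ and $n\ge1$, and let $\mathbf A_1,\dots,\mathbf A_N$ be real $n\times n$ matrices with $\|\mathbf A_i\|_\infty\le 1/4$ for all $i$. Suppose that the Gauss differentiation matrix $\mathbf D_{1:N}$ is invertible with $\|\mathbf D_{1:N}^{-1}\|_\infty\le2$. Then for each $\mathbf q\in\mathbb R^n$ and $\mathbf p=(\mathbf p_1,\dots,\mathbf p_N)\in\mathbb R^{nN}$ with $\mathbf p_i\in\mathbb R^n$, the linear system $$\sum_{j=1}^ND_{ij}\mathbf X_j-\mathbf A_i\mathbf X_i=\mathbf p_i\ (1\le i\le N),\qquad \mathbf X_{N+1}-\sum_{j=1}^N\omega_j\mathbf A_j\mathbf X_j=\mathbf q$$ has a unique solution $\mathbf X_j\in\mathbb R^n$, $1\le j\le N+1$, and this solution satisfies $\|\mathbf X_j\|_\infty\le 4\|\mathbf p\|_\infty+\|\mathbf q\|_\infty$ for $1\le j\le N+1$.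
   Context: $-1<\tau_1<\dots<\tau_N<1$ are the $N$ Gauss quadrature abscissas (roots of the degree-$N$ Legendre polynomial), $\omega_1,\dots,\omega_N>0$ the Gauss weights (summing to 2), $\tau_0=-1$. $D_{ij}=\dot L_j(\tau_i)$ for $1\le i\le N$, $0\le j\le N$, where $L_j(\tau)=\prod_{k=0,k\ne j}^N\frac{\tau-\tau_k}{\tau_j-\tau_k}$; $\mathbf D_{1:N}=(D_{ij})_{1\le i,j\le N}$. For a vector, $\|\cdot\|_\infty$ is the maximum absolute entry; for a matrix it is the largest absolute row sum (the induced norm). *)

From HB Require Import structures.
From mathcomp Require Import all_boot all_order all_algebra.
From mathcomp Require Import reals.
Set Implicit Arguments. Unset Strict Implicit. Unset Printing Implicit Defensive.
Import Order.TTheory GRing.Theory Num.Theory.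
Local Open Scope ring_scope.

Section Defs.
Variable R : realType.

Definition legendre (N : nat) : {poly R} :=
  ((2%:R ^+ N * (N`!)%:R)^-1) *: ((('X ^+ 2 - 1) ^+ N)^`(N)).

(* Integral over [-1,1] of a polynomial, computed from its coefficients:
   int_{-1}^{1} x^k dx = (1 - (-1)^(k+1)) / (k+1). *)
Definition int_m11 (p : {poly R}) : R :=
  \sum_(k < size p) p`_k * ((1 - (-1) ^+ k.+1) / (k.+1)%:R).

Definition lagr (m : nat) (t : 'I_m -> R) (j : 'I_m) : {poly R} :=
  \prod_(k < m | k != j) (('X - (t k)%:P) * ((t j - t k)^-1)%:P).

(* Nodes tau_0 = -1, tau_1 .. tau_N (tau given on 'I_N, 0-based) *)
Definition ext_nodes (N : nat) (tau : 'I_N -> R) (k : 'I_N.+1) : R :=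
  match unlift ord0 k with None => -1 | Some j => tau j end.

Definition gauss_weight (N : nat) (tau : 'I_N -> R) (j : 'I_N) : R :=
  int_m11 (lagr tau j).

(* D_{1:N}: entries D_ij = L_j'(tau_i), 1 <= i,j <= N, with L_j the Lagrange
   basis on tau_0 = -1, tau_1, ..., tau_N *)
Definition Dmat (N : nat) (tau : 'I_N -> R) : 'M[R]_N :=
  \matrix_(i < N, j < N) ((lagr (ext_nodes tau) (lift ord0 j))^`()).[tau i].

Definition vnorm (n : nat) (v : 'cV[R]_n) : R := \big[Num.max/0]_(i < n) `|v i 0|.
Definition mnorm (m n : nat) (A : 'M[R]_(m, n)) : R :=
  \big[Num.max/0]_(i < m) \sum_(j < n) `|A i j|.
Definition bvnorm (N n : nat) (p : 'I_N -> 'cV[R]_n) : R :=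
  \big[Num.max/0]_(i < N) vnorm (p i).

End Defs.

From HB Require Import structures.
From mathcomp Require Import all_boot all_order all_algebra.
From mathcomp Require Import reals.
From mathcomp Require Import polyrcf ring lra zify.
Set Implicit Arguments. Unset Strict Implicit. Unset Printing Implicit Defensive.
Import Order.TTheory GRing.Theory Num.Theory.
Local Open Scope ring_scope.

(* Writing the collocation equations as X = D^-1 (p + A X) gives
   |X| <= 2 (|p| + |X| / 4), i.e. |X| <= 4 |p|.  Applied to the difference of
   two solutions this gives uniqueness, hence existence since the system is
   square.  The last unknown is explicit, and since the Gauss weights are
   nonnegative (Gauss quadrature is exact for L_j^2, by orthogonality of the
   Legendre polynomial) and sum to 2, it is bounded by |q| + 2 (1/4) 4 |p|. *)

Section InfinityNorms.
Variable R : realType.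

Lemma vnorm_ge0 n (v : 'cV[R]_n) : 0 <= vnorm v.
Proof. by rewrite /vnorm; elim/big_ind: _ => // x y hx hy; rewrite le_max hx. Qed.

Lemma ler_entry_vnorm n (v : 'cV[R]_n) i : `|v i 0| <= vnorm v.
Proof. exact: (le_bigmax _ (fun i => `|v i 0|) i). Qed.

Lemma vnorm_le n (v : 'cV[R]_n) M :
  0 <= M -> (forall i, `|v i 0| <= M) -> vnorm v <= M.
Proof. by move=> M_ge0 le_vM; apply: bigmax_le. Qed.

Lemma vnorm_le0 n (v : 'cV[R]_n) : vnorm v <= 0 -> v = 0.
Proof.
move=> v_le0; apply/matrixP => i j; rewrite (ord1 j) mxE.
by apply/normr0_eq0/le_anti; rewrite normr_ge0 (le_trans (ler_entry_vnorm v i)).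
Qed.

Lemma ler_vnormD n (u v : 'cV[R]_n) : vnorm (u + v) <= vnorm u + vnorm v.
Proof.
apply: vnorm_le => [|i]; first by rewrite addr_ge0 ?vnorm_ge0.
by rewrite mxE (le_trans (ler_normD _ _)) // lerD ?ler_entry_vnorm.
Qed.

Lemma ler_vnormZ n (c : R) (u : 'cV[R]_n) : vnorm (c *: u) <= `|c| * vnorm u.
Proof.
apply: vnorm_le => [|i]; first by rewrite mulr_ge0 ?vnorm_ge0.
by rewrite mxE normrM ler_wpM2l ?ler_entry_vnorm.
Qed.

Lemma ler_vnorm_sum I (r : seq I) n (F : I -> 'cV[R]_n) :
  vnorm (\sum_(j <- r) F j) <= \sum_(j <- r) vnorm (F j).
Proof.
elim/big_ind2: _ => [|x1 x2 y1 y2 le1 le2|//].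
  by apply: vnorm_le => // i; rewrite mxE normr0.
exact: le_trans (ler_vnormD _ _) (lerD le1 le2).
Qed.

Lemma bvnorm_ge0 N n (p : 'I_N -> 'cV[R]_n) : 0 <= bvnorm p.
Proof.
rewrite /bvnorm; elim/big_ind: _ => // [x y hx hy|i _].
  by rewrite le_max hx.
exact: vnorm_ge0.
Qed.

Lemma ler_vnorm_bvnorm N n (p : 'I_N -> 'cV[R]_n) i : vnorm (p i) <= bvnorm p.
Proof. exact: (le_bigmax _ (fun i => vnorm (p i)) i). Qed.

Lemma bvnorm_le N n (p : 'I_N -> 'cV[R]_n) M :
  0 <= M -> (forall i, vnorm (p i) <= M) -> bvnorm p <= M.
Proof. by move=> M_ge0 le_pM; apply: bigmax_le. Qed.

Lemma mnorm_ge0 m n (A : 'M[R]_(m, n)) : 0 <= mnorm A.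
Proof.
rewrite /mnorm; elim/big_ind: _ => // [x y hx hy|i _].
  by rewrite le_max hx.
by rewrite sumr_ge0.
Qed.

Lemma ler_row_sum_mnorm m n (A : 'M[R]_(m, n)) i : \sum_j `|A i j| <= mnorm A.
Proof. exact: (le_bigmax _ (fun i => \sum_j `|A i j|) i). Qed.

Lemma ler_vnorm_mul m n (A : 'M[R]_(m, n)) (u : 'cV[R]_n) :
  vnorm (A *m u) <= mnorm A * vnorm u.
Proof.
apply: vnorm_le => [|i]; first by rewrite mulr_ge0 ?vnorm_ge0 ?mnorm_ge0.
rewrite mxE (le_trans (ler_norm_sum _ _ _)) //.
apply: (@le_trans _ _ (\sum_j `|A i j| * vnorm u)).
  by apply: ler_sum => j _; rewrite normrM ler_wpM2l ?ler_entry_vnorm.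
by rewrite -mulr_suml ler_wpM2r ?vnorm_ge0 ?ler_row_sum_mnorm.
Qed.

Lemma ler_vnorm_weighted_sum N n (w : 'I_N -> R) (A : 'I_N -> 'M[R]_n)
    (X : 'I_N -> 'cV[R]_n) (a : R) :
  (forall j, 0 <= w j) -> (forall j, mnorm (A j) <= a) ->
  vnorm (\sum_j w j *: (A j *m X j)) <= (\sum_j w j) * a * bvnorm X.
Proof.
move=> w_ge0 le_Aa; rewrite !mulr_suml.
apply: le_trans (ler_vnorm_sum _ _) _; apply: ler_sum => j _.
rewrite -mulrA (le_trans (ler_vnormZ _ _)) // ger0_norm // ler_wpM2l //.
rewrite (le_trans (ler_vnorm_mul _ _)) // ler_pM ?mnorm_ge0 ?vnorm_ge0 //.
exact: ler_vnorm_bvnorm.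
Qed.

End InfinityNorms.

Lemma linear_inj_surj (K : fieldType) m n
    (f : {linear 'M[K]_(m, n) -> 'M[K]_(m, n)}) :
  (forall M, f M = 0 -> M = 0) -> forall T, exists M, f M = T.
Proof.
move=> f_inj T.
have f_unit : lin_mx f \in unitmx.
  rewrite -row_free_unit; apply: inj_row_free => v fv0.
  have : f (vec_mx v) = 0 by rewrite -mx_rV_lin fv0 linear0.
  by move/f_inj => v0; rewrite -(vec_mxK v) v0 linear0.
exists (vec_mx (mxvec T *m invmx (lin_mx f))).
by rewrite -mx_rV_lin mulmxKV // mxvecK.
Qed.

Section Collocation.
Variables (R : realType) (N n : nat) (D : 'M[R]_N) (A : 'I_N -> 'M[R]_n).

Definition colloc (X : 'I_N -> 'cV[R]_n) (i : 'I_N) : 'cV[R]_n :=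
  \sum_j D i j *: X j - A i *m X i.

Lemma collocB (X Y : 'I_N -> 'cV[R]_n) i :
  colloc (fun j => X j - Y j) i = colloc X i - colloc Y i.
Proof.
rewrite /colloc; under eq_bigr do rewrite scalerBr.
by rewrite sumrB mulmxBr !opprB addrACA [RHS]addrACA (addrC (- _)).
Qed.

Definition colloc_mx (M : 'M[R]_(n, N)) : 'M[R]_(n, N) :=
  \matrix_(r, i) (\sum_j D i j * M r j - \sum_k A i r k * M k i).

Lemma colloc_mx_col M i : col i (colloc_mx M) = colloc (fun j => col j M) i.
Proof.
apply/matrixP => r c; rewrite (ord1 c) !mxE summxE.
by congr (_ - _); apply: eq_bigr => k _; rewrite !mxE.
Qed.

Lemma colloc_mx_is_linear : linear colloc_mx.
Proof.
move=> a M1 M2; apply/matrixP => r i; rewrite !mxE.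
rewrite (eq_bigr (fun j => a * (D i j * M1 r j) + D i j * M2 r j)); last first.
  by move=> j _; rewrite !mxE; ring.
rewrite (eq_bigr (fun k => a * (A i r k * M1 k i) + A i r k * M2 k i)); last first.
  by move=> k _; rewrite !mxE; ring.
rewrite !big_split -!mulr_sumr /=; ring.
Qed.

HB.instance Definition _ :=
  GRing.isLinear.Build R 'M[R]_(n, N) 'M[R]_(n, N) _ colloc_mx colloc_mx_is_linear.

Hypothesis D_unit : D \in unitmx.
Hypothesis invD_le2 : mnorm (invmx D) <= 2.
Hypothesis A_le : forall i, mnorm (A i) <= 1 / 4.

Lemma colloc_inv (X : 'I_N -> 'cV[R]_n) k :
  X k = \sum_i invmx D k i *: (colloc X i + A i *m X i).
Proof.
under eq_bigr do rewrite subrK scaler_sumr.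
rewrite exchange_big /=.
under eq_bigr do under eq_bigr do rewrite scalerA.
under eq_bigr do rewrite -scaler_suml.
have invDD j : \sum_i invmx D k i * D i j = (k == j)%:R.
  by have := congr1 (fun M : 'M[R]_N => M k j) (mulVmx D_unit); rewrite !mxE.
under eq_bigr do rewrite invDD.
rewrite (bigD1 k) //= eqxx scale1r big1 ?addr0 // => j /negbTE.
by rewrite eq_sym => ->; rewrite scale0r.
Qed.

Lemma colloc_bvnorm (X P : 'I_N -> 'cV[R]_n) :
  (forall i, colloc X i = P i) -> bvnorm X <= 4 * bvnorm P.
Proof.
move=> XP; set b := bvnorm X; set c := bvnorm P.
have b_ge0 : 0 <= b by apply: bvnorm_ge0.
have c_ge0 : 0 <= c by apply: bvnorm_ge0.
have rhs_le i : vnorm (P i + A i *m X i) <= c + 1 / 4 * b.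
  rewrite (le_trans (ler_vnormD _ _)) // lerD ?ler_vnorm_bvnorm //.
  rewrite (le_trans (ler_vnorm_mul _ _)) // ler_pM ?mnorm_ge0 ?vnorm_ge0 //.
  exact: ler_vnorm_bvnorm.
suff : b <= 2 * (c + 1 / 4 * b) by lra.
apply: bvnorm_le => [|k]; first by lra.
rewrite colloc_inv; under eq_bigr do rewrite XP.
apply: le_trans (ler_vnorm_sum _ _) _.
apply: (@le_trans _ _ (\sum_i `|invmx D k i| * (c + 1 / 4 * b))).
  by apply: ler_sum => i _; rewrite (le_trans (ler_vnormZ _ _)) // ler_wpM2l.
rewrite -mulr_suml ler_wpM2r ?addr_ge0 ?mulr_ge0 ?invr_ge0 //.
exact: le_trans (ler_row_sum_mnorm _ _) invD_le2.
Qed.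

Lemma colloc_eq0 (X : 'I_N -> 'cV[R]_n) :
  (forall i, colloc X i = 0) -> forall j, X j = 0.
Proof.
move=> X0 j; apply: vnorm_le0.
have bvnorm0 : bvnorm (fun _ : 'I_N => 0 : 'cV[R]_n) = 0.
  apply/le_anti; rewrite bvnorm_ge0 andbT; apply: bvnorm_le => // i.
  by apply: vnorm_le => // k; rewrite mxE normr0.
have := colloc_bvnorm X0; rewrite bvnorm0 mulr0.
exact: le_trans (ler_vnorm_bvnorm X j).
Qed.

Lemma colloc_inj (X Y : 'I_N -> 'cV[R]_n) :
  (forall i, colloc X i = colloc Y i) -> forall j, X j = Y j.
Proof.
move=> XY j; apply/eqP; rewrite -subr_eq0; apply/eqP.
by apply: (colloc_eq0 (X := fun j => X j - Y j)) => i; rewrite collocB XY subrr.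
Qed.

Lemma colloc_solvable (P : 'I_N -> 'cV[R]_n) :
  exists X : 'I_N -> 'cV[R]_n, forall i, colloc X i = P i.
Proof.
have colloc_mx_inj M : colloc_mx M = 0 -> M = 0.
  move=> M0; apply/matrixP => r j.
  have colM0 i : colloc (fun j => col j M) i = 0.
    by rewrite -colloc_mx_col M0 col0.
  by have := congr1 (fun v : 'cV[R]_n => v r 0) (colloc_eq0 colM0 j); rewrite !mxE.
have [M MP] := linear_inj_surj colloc_mx_inj (\matrix_(r, i) P i r 0).
exists (fun j => col j M) => i; rewrite -colloc_mx_col MP.
by apply/matrixP => r c; rewrite (ord1 c) !mxE.
Qed.

End Collocation.

Section Integral.
Variable R : realType.
Implicit Types p q : {poly R}.

Definition monomial_integral (k : nat) : R := (1 - (-1) ^+ k.+1) / (k.+1)%:R.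

Lemma int_m11_widen m p : (size p <= m)%N ->
  int_m11 p = \sum_(k < m) p`_k * monomial_integral k.
Proof.
move=> size_p; rewrite /int_m11 (big_ord_widen m (fun k => p`_k * monomial_integral k)) //.
rewrite big_mkcond; apply: eq_bigr => k _; case: ifP => // /negbT.
by rewrite -leqNgt => le_pk; rewrite nth_default // mul0r.
Qed.

Lemma int_m11_is_scalar : scalar (@int_m11 R).
Proof.
move=> a p q; pose m := maxn (size p) (size q).
have size_apq : (size (a *: p + q)%R <= m)%N.
  rewrite (leq_trans (size_polyD _ _)) // geq_max leq_maxr andbT.
  exact: leq_trans (size_scale_leq _ _) (leq_maxl _ _).
rewrite !(@int_m11_widen m) ?leq_maxl ?leq_maxr // mulr_sumr -big_split.
by apply: eq_bigr => k _; rewrite coefD coefZ /=; ring.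
Qed.

HB.instance Definition _ :=
  GRing.isLinear.Build R {poly R} R *%R (@int_m11 R) int_m11_is_scalar.

Lemma int_m11_1 : int_m11 (1 : {poly R}) = 2.
Proof. rewrite /int_m11 size_poly1 big_ord1 coefC /=; lra. Qed.

Lemma int_m11_deriv p : int_m11 p^`() = p.[1] - p.[-1].
Proof.
have size_p' : (size p^`() <= size p)%N.
  have [->|p_neq0] := eqVneq p 0; first by rewrite deriv0.
  exact/ltnW/lt_size_deriv.
rewrite (int_m11_widen size_p') !(@horner_coef_wide _ (size p).+1) //.
rewrite -sumrB big_ord_recl /= !expr0 subrr add0r.
apply: eq_bigr => k _; rewrite coef_deriv /monomial_integral /bump /= -mulr_natr.
have k1_neq0 : (k.+1)%:R != 0 :> R by rewrite pnatr_eq0.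
by rewrite expr1n; field; rewrite addrC natr1.
Qed.

Definition primitive p : {poly R} := \poly_(i < (size p).+1) (p`_i.-1 / i%:R).

Lemma deriv_primitive p : (primitive p)^`() = p.
Proof.
apply/polyP => i; rewrite coef_deriv coef_poly /=; case: ifP => lt_ip.
  have i1_neq0 : (i.+1)%:R != 0 :> R by rewrite pnatr_eq0.
  by rewrite -(mulr_natr (p`_i / _)) mulfVK.
by rewrite mul0rn nth_default // leqNgt -ltnS lt_ip.
Qed.

Lemma int_m11_sqr_ge0 p : 0 <= int_m11 (p * p).
Proof.
rewrite -(deriv_primitive (p * p)) int_m11_deriv subr_ge0.
apply: (@ler_hornerW _ (-1) 1); last by lra.
- by move=> x _; rewrite deriv_primitive hornerM -expr2 sqr_ge0.
- by rewrite in_itv /=; apply/andP; split; lra.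
- by rewrite in_itv /=; apply/andP; split; lra.
Qed.

End Integral.

Section Legendre.
Variable R : realType.
Implicit Types p q g : {poly R}.

Lemma derivn_XsubC_exp_factor (a : R) m g k : (k <= m)%N ->
  exists h, (('X - a%:P) ^+ m * g)^`(k) = ('X - a%:P) ^+ (m - k) * h.
Proof.
elim: k => [|k IHk] le_km; first by exists g; rewrite subn0.
have [h Eh] := IHk (ltnW le_km); rewrite -(subnSK le_km) in Eh.
exists (h *+ (m - k.+1).+1 + ('X - a%:P) * h^`()).
rewrite derivnS Eh derivM deriv_exp derivXsubC mul1r /= exprS.
by rewrite mulrDr mulrnAl mulrnAr mulrA [_ * ('X - a%:P)]mulrC.
Qed.

Definition rodrigues (N : nat) : {poly R} := ('X ^+ 2 - 1) ^+ N.

Lemma rodriguesE N : rodrigues N = ('X - 1%:P) ^+ N * ('X - (-1)%:P) ^+ N.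
Proof. by rewrite /rodrigues -exprMn; congr (_ ^+ _); rewrite polyCN opprK; ring. Qed.

(* The k-th derivative keeps a root of order N - k at +-1. *)
Lemma rodrigues_derivn_pm1 N k : (k < N)%N ->
  (rodrigues N)^`(k).[1] = 0 /\ (rodrigues N)^`(k).[-1] = 0.
Proof.
move=> lt_kN; split.
  have [h Eh] := derivn_XsubC_exp_factor 1 (('X - (-1)%:P) ^+ N) (ltnW lt_kN).
  by rewrite rodriguesE Eh hornerM horner_exp hornerXsubC subrr expr0n subn_eq0 leqNgt lt_kN mul0r.
have [h Eh] := derivn_XsubC_exp_factor (-1) (('X - 1%:P) ^+ N) (ltnW lt_kN).
rewrite rodriguesE mulrC Eh.
by rewrite hornerM horner_exp hornerXsubC subrr expr0n subn_eq0 leqNgt lt_kN mul0r.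
Qed.

(* Integration by parts k times; the boundary terms vanish by the previous lemma. *)
Lemma rodrigues_derivn_orth N k q : (k <= N)%N -> (size q <= k)%N ->
  int_m11 ((rodrigues N)^`(k) * q) = 0.
Proof.
elim: k q => [|k IHk] q le_kN size_q.
  by move: size_q; rewrite leqn0 size_poly_eq0 => /eqP ->; rewrite mulr0 linear0.
have -> : (rodrigues N)^`(k.+1) * q
          = ((rodrigues N)^`(k) * q)^`() - (rodrigues N)^`(k) * q^`().
  by rewrite derivM derivnS addrK.
have [at1 atN1] := rodrigues_derivn_pm1 le_kN.
rewrite linearB /= int_m11_deriv !hornerM at1 atN1 !mul0r subrr IHk ?subrr ?(ltnW le_kN) //.
have [->|q_neq0] := eqVneq q 0; first by rewrite deriv0 size_poly0.
by rewrite -ltnS (leq_trans (lt_size_deriv q_neq0)).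
Qed.

Lemma legendre_orth N q : (size q <= N)%N -> int_m11 (legendre R N * q) = 0.
Proof.
by move=> size_q; rewrite /legendre -/(rodrigues N) -scalerAl linearZ /= rodrigues_derivn_orth // mulr0.
Qed.

Lemma size_rodrigues N : size (rodrigues N) = (N + N).+1.
Proof.
rewrite rodriguesE size_monicM ?monic_neq0 ?monic_exp ?monicXsubC //.
by rewrite !size_exp_XsubC addSn addnS.
Qed.

Lemma lead_coef_rodrigues N : (rodrigues N)`_(N + N) = 1.
Proof.
have : rodrigues N \is monic by rewrite rodriguesE monicMl ?monic_exp ?monicXsubC.
by move/monicP; rewrite /lead_coef size_rodrigues.
Qed.

Lemma legendre_neq0 N : legendre R N != 0.
Proof.
have c_neq0 : ((2%:R ^+ N * (N`!)%:R)^-1 : R) != 0.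
  by rewrite invr_eq0 mulf_neq0 ?expf_neq0 ?pnatr_eq0 // -lt0n fact_gt0.
apply/eqP => /(congr1 (fun p : {poly R} => p`_N)).
rewrite /legendre coefZ coef_derivn lead_coef_rodrigues coef0 => /eqP.
by rewrite mulf_eq0 (negbTE c_neq0) pnatr_eq0 eqn0Ngt ffact_gt0 leq_addr.
Qed.

Lemma size_legendre N : (size (legendre R N) <= N.+1)%N.
Proof.
apply/leq_sizeP => j lt_Nj.
rewrite /legendre coefZ coef_derivn nth_default ?mul0rn ?mulr0 //.
by rewrite size_rodrigues -addnS leq_add2l.
Qed.

End Legendre.

Section GaussWeights.
Variables (R : realType) (N : nat) (tau : 'I_N -> R).
Hypothesis tau_incr : forall i j : 'I_N, (i < j)%N -> tau i < tau j.
Hypothesis tau_root : forall i : 'I_N, root (legendre R N) (tau i).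

Lemma tau_inj : injective tau.
Proof.
move=> i j tau_ij; apply/val_inj/eqP; case: (ltngtP i j) => // lt_ij.
  by have := tau_incr lt_ij; rewrite tau_ij ltxx.
by have := tau_incr lt_ij; rewrite tau_ij ltxx.
Qed.

Let nodes := map tau (enum 'I_N).
Let node_poly : {poly R} := \prod_(z <- nodes) ('X - z%:P).

Lemma uniq_nodes : uniq nodes.
Proof. by rewrite map_inj_uniq ?enum_uniq //; exact: tau_inj. Qed.

Lemma size_node_poly : size node_poly = N.+1.
Proof. by rewrite size_prod_XsubC size_map size_enum_ord. Qed.

Lemma node_poly_neq0 : node_poly != 0.
Proof. by rewrite -size_poly_eq0 size_node_poly. Qed.

Lemma node_poly_factor (p : {poly R}) :
  (forall i, root p (tau i)) -> exists g, p = g * node_poly.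
Proof.
move=> p_root; apply: uniq_roots_prod_XsubC; last by rewrite uniq_rootsE uniq_nodes.
by apply/allP => z /mapP [i _ ->].
Qed.

(* The node polynomial is a nonzero multiple of the Legendre polynomial. *)
Lemma node_poly_orth (q : {poly R}) : (size q <= N)%N -> int_m11 (q * node_poly) = 0.
Proof.
move=> size_q; have [g Eg] := node_poly_factor tau_root.
have g_neq0 : g != 0.
  by apply: contraNneq (legendre_neq0 R N) => g0; rewrite Eg g0 mul0r.
have size_g : (size g <= 1)%N.
  rewrite -(leq_add2r N) add1n.
  by move: (size_legendre R N); rewrite Eg size_mul ?node_poly_neq0 // size_node_poly addnS.
have Eg0 := size1_polyC size_g.
have g0_neq0 : g`_0 != 0 by apply: contraNneq g_neq0 => g00; rewrite Eg0 g00.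
have -> : node_poly = (g`_0)^-1 *: legendre R N.
  by rewrite Eg [X in _ *: (X * _)]Eg0 mul_polyC scalerA mulVf // scale1r.
by rewrite -scalerAr linearZ /= [q * _]mulrC legendre_orth // mulr0.
Qed.

Lemma lagr_node j k : (lagr tau j).[tau k] = (j == k)%:R.
Proof.
rewrite /lagr horner_prod; have [<-|neq_jk] := eqVneq j k.
  rewrite big1 // => i neq_ij.
  rewrite hornerM hornerXsubC hornerC divff // subr_eq0.
  by apply: contra neq_ij => /eqP /tau_inj ->.
by rewrite (bigD1 k) 1?eq_sym //= hornerM hornerXsubC subrr !mul0r.
Qed.

Lemma size_lagr j : (size (lagr tau j) <= N)%N.
Proof.
have inv_neq0 i : i != j -> (tau j - tau i)^-1 != 0.
  move=> neq_ij; rewrite invr_eq0 subr_eq0.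
  by apply: contra neq_ij => /eqP /tau_inj ->.
rewrite /lagr size_prod => [|i neq_ij]; last first.
  by rewrite mulf_neq0 ?polyXsubC_eq0 // polyC_eq0 inv_neq0.
rewrite (eq_bigr (fun _ => 2%N)) => [|i neq_ij]; last first.
  rewrite size_mul ?polyXsubC_eq0 ?polyC_eq0 ?inv_neq0 //.
  by rewrite size_XsubC size_polyC inv_neq0.
rewrite sum_nat_const.
have -> : #|(fun i : 'I_N => i != j)| = N.-1.
  by rewrite -[in RHS](card_ord N) -(cardC1 j); apply: eq_card => i; rewrite !inE.
by have := ltn_ord j; lia.
Qed.

(* Both sides have degree < N and agree at the N nodes. *)
Lemma sum_lagr : (0 < N)%N -> \sum_j lagr tau j = 1.
Proof.
move=> N_gt0.
apply/eqP; rewrite -subr_eq0; apply/eqP.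
apply: (@poly_ltsp_roots _ _ nodes); last first.
- apply/allP => z /mapP [k _ ->]; rewrite rootE hornerD hornerN hornerC.
  rewrite horner_sum (bigD1 k) //= lagr_node eqxx big1 ?addr0 ?subrr //.
  by move=> i neq_ik; rewrite lagr_node (negbTE neq_ik).
- exact: uniq_nodes.
rewrite size_map size_enum_ord (leq_trans (size_polyD _ _)) //.
rewrite geq_max size_polyN size_poly1 N_gt0 andbT.
elim/big_ind: _ => [|x y hx hy|i _]; first by rewrite size_poly0.
  by rewrite (leq_trans (size_polyD _ _)) // geq_max hx hy.
exact: size_lagr.
Qed.

Lemma gauss_weight_sum : (0 < N)%N -> \sum_j gauss_weight tau j = 2.
Proof. by move=> N_gt0; rewrite /gauss_weight -linear_sum /= sum_lagr ?int_m11_1. Qed.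

(* L_j^2 - L_j vanishes at the nodes, so w_j = int L_j = int L_j^2. *)
Lemma gauss_weight_ge0 j : 0 <= gauss_weight tau j.
Proof.
rewrite /gauss_weight; set l := lagr tau j.
have [g Eg] : exists g, l * l - l = g * node_poly.
  apply: node_poly_factor => k; rewrite rootE hornerD hornerN hornerM lagr_node.
  by case: (j == k); rewrite ?mul1r ?mul0r subrr.
have size_g : (size g <= N)%N.
  have [g0|g_neq0] := eqVneq g 0; first by rewrite g0 size_poly0.
  have : (size (l * l - l)%R <= N + N)%N.
    rewrite (leq_trans (size_polyD _ _)) // geq_max size_polyN.
    rewrite (leq_trans (size_polyMleq _ _)) ?(leq_trans (size_lagr j)) ?leq_addr //.
    by have := size_lagr j; rewrite -/l; case: (size l) => //= m; lia.
  rewrite Eg size_mul ?node_poly_neq0 // size_node_poly addnS /=.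
  by rewrite leq_add2r.
have := node_poly_orth size_g; rewrite -Eg linearB => /eqP; rewrite subr_eq0 => /eqP <-.
exact: int_m11_sqr_ge0.
Qed.

End GaussWeights.

Theorem lemma4p1 (R : realType) (N n : nat) (tau : 'I_N -> R)
  (A : 'I_N -> 'M[R]_n) :
  (0 < N)%N -> (0 < n)%N ->
  (* tau_1 < ... < tau_N are the roots of the degree-N Legendre polynomial *)
  (forall i j : 'I_N, (i < j)%N -> tau i < tau j) ->
  (forall i : 'I_N, root (legendre R N) (tau i)) ->
  (forall i, mnorm (A i) <= 1 / 4) ->
  Dmat tau \in unitmx ->
  mnorm (invmx (Dmat tau)) <= 2 ->
  forall (q : 'cV[R]_n) (p : 'I_N -> 'cV[R]_n),
  let sys (X : 'I_N -> 'cV[R]_n) (Y : 'cV[R]_n) :=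
    (forall i : 'I_N,
        \sum_(j < N) Dmat tau i j *: X j - A i *m X i = p i) /\
    Y - \sum_(j < N) gauss_weight tau j *: (A j *m X j) = q in
  exists (X : 'I_N -> 'cV[R]_n) (Y : 'cV[R]_n),
    [/\ sys X Y,
        (forall X' Y', sys X' Y' -> (forall j, X' j = X j) /\ Y' = Y),
        (forall j, vnorm (X j) <= 4 * bvnorm p + vnorm q)
      & vnorm Y <= 4 * bvnorm p + vnorm q].
Proof.
move=> N_gt0 _ tau_incr tau_root A_le D_unit invD_le2 q p sys.
have [X XP] := colloc_solvable D_unit invD_le2 A_le p.
have X_le : bvnorm X <= 4 * bvnorm p := colloc_bvnorm D_unit invD_le2 A_le XP.
pose S (X : 'I_N -> 'cV[R]_n) := \sum_j gauss_weight tau j *: (A j *m X j).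
have p_ge0 := bvnorm_ge0 p.
exists X, (q + S X); split.
- by split => //; rewrite addrK.
- move=> X' Y' [X'P <-].
  have eqX : forall j, X' j = X j.
    by apply: (colloc_inj D_unit invD_le2 A_le) => i; rewrite XP; apply: X'P.
  have eqS : S X' = S X by apply: eq_bigr => j _; rewrite eqX.
  by split => //; rewrite -/(S X') eqS subrK.
- move=> j; rewrite (le_trans (ler_vnorm_bvnorm X j)) // (le_trans X_le) //.
  by rewrite lerDl vnorm_ge0.
- rewrite (le_trans (ler_vnormD _ _)) // addrC lerD2r.
  rewrite (le_trans (ler_vnorm_weighted_sum X (gauss_weight_ge0 tau_incr tau_root) A_le)) //.
  by rewrite gauss_weight_sum //; lra.
Qed.
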